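(* Let $N$ be a closed flat surface and consider two disjoint embedded open metric disks in $N$, both of diameter $h$, with centers at distance $d$. If this configuration realizes the maximum of $h\sqrt{4h^2+d^2}/\mathsf{vol}(N)$ over all closed flat surfaces and all configurations of two disjoint embedded open disks of equal diameter, then $d=h$.
   Context: A closed flat surface is a flat torus or flat Klein bottle; $\mathsf{vol}$ is area; distances are measured in the flat metric. *)

From Stdlib Require Import Reals Lra ZArith.
Open Scope R_scope.

Definition pt := (R * R)%type.
Definition edist (p q : pt) : R :=
  sqrt ((fst p - fst q) ^ 2 + (snd p - snd q) ^ 2).

(** Closed flat surfaces, up to isometry (classification):
    - a flat torus R^2 / (Z u + Z v), u = (u1,u2), v = (v1,v2) linearly independent;
    - a flat Klein bottle R^2 / G where G is generated by the glide reflection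
      (x,y) |-> (x + a, -y) and the translation (x,y) |-> (x, y + b), a, b > 0. *)
Inductive flat_surface : Type :=
  | FlatTorus (u1 u2 v1 v2 : R)
  | FlatKlein (a b : R).

Definition valid_surface (N : flat_surface) : Prop :=
  match N with
  | FlatTorus u1 u2 v1 v2 => u1 * v2 - u2 * v1 <> 0
  | FlatKlein a b => 0 < a /\ 0 < b
  end.

Definition area (N : flat_surface) : R :=
  match N with
  | FlatTorus u1 u2 v1 v2 => Rabs (u1 * v2 - u2 * v1)
  | FlatKlein a b => a * b
  end.

Definition deck (N : flat_surface) (m n : Z) (p : pt) : pt :=
  match N with
  | FlatTorus u1 u2 v1 v2 =>
      (fst p + IZR m * u1 + IZR n * v1, snd p + IZR m * u2 + IZR n * v2)
  | FlatKlein a b =>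
      (fst p + IZR m * a,
       (if Z.even m then snd p else - snd p) + IZR n * b)
  end.

Definition same_point (N : flat_surface) (p q : pt) : Prop :=
  exists m n : Z, deck N m n p = q.

Definition is_flat_dist (N : flat_surface) (p q : pt) (d : R) : Prop :=
  (exists m n : Z, edist p (deck N m n q) = d) /\
  (forall m n : Z, d <= edist p (deck N m n q)).

Definition embedded_disk (N : flat_surface) (p : pt) (r : R) : Prop :=
  forall x y : pt, edist p x < r -> edist p y < r -> same_point N x y -> x = y.

Definition disjoint_disks (N : flat_surface) (p1 p2 : pt) (r : R) : Prop :=
  forall x y : pt, edist p1 x < r -> edist p2 y < r -> ~ same_point N x y.

Definition two_disk_config (N : flat_surface) (h : R) (p1 p2 : pt) : Prop :=
  valid_surface N /\ 0 < h /\
  embedded_disk N p1 (h / 2) /\ embedded_disk N p2 (h / 2) /\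
  disjoint_disks N p1 p2 (h / 2).

Definition objective (N : flat_surface) (h d : R) : R :=
  h * sqrt (4 * h ^ 2 + d ^ 2) / area N.

(* Every configuration satisfies 3 h^2 (4 h^2 + d^2) <= 5 vol(N)^2, strictly when d > h
   (disjointness alone forces d >= h), whereas the hexagonal torus, with disks of diameter 1
   centred at 0 and (1/2, sqrt 3 / 2) in R^2 / (Z (1,0) + Z (0, sqrt 3)), has d = h = 1 and
   attains this bound.  So a maximiser cannot have d > h.

   For a torus, let l be a shortest lattice vector, completed to a lattice basis.  Then
   |l| >= h by embeddedness, 3 |l|^4 <= 4 vol^2 because the lattice lines parallel to l are
   vol / |l| apart, and 4 |l|^2 d^2 <= |l|^4 + vol^2 because every point is within half a line
   spacing across and |l| / 2 along of a lattice point.  For a Klein bottle with glide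
   (x, y) |-> (x + a, -y) and vertical period b, embeddedness gives h <= 2a and h <= b.  If
   h <= a, the a x b rectangle is a fundamental domain and 4 d^2 <= a^2 + b^2.  If a < h, the
   glide reflections through the two centres force the vertical offsets of the images of the
   second centre in the two columns next to the first to differ in absolute value by at least
   sqrt (h^2 - a^2). *)

From Stdlib Require Import Reals Lra Lia Psatz ZArith List.
Open Scope R_scope.

(** * Plane geometry and deck groups *)

Definition vadd (p q : pt) : pt := (fst p + fst q, snd p + snd q).
Definition vsub (p q : pt) : pt := (fst p - fst q, snd p - snd q).
Definition mid (p q : pt) : pt := ((fst p + fst q) / 2, (snd p + snd q) / 2).
Definition norm2 (p : pt) : R := fst p ^ 2 + snd p ^ 2.
Definition dot (p q : pt) : R := fst p * fst q + snd p * snd q.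
Definition cross (p q : pt) : R := fst p * snd q - snd p * fst q.

Lemma norm2_nonneg p : 0 <= norm2 p.
Proof. unfold norm2. nra. Qed.

Lemma lagrange p q : norm2 p * norm2 q = dot p q ^ 2 + cross p q ^ 2.
Proof. unfold norm2, dot, cross. ring. Qed.

Lemma cross_sqr_le p q : cross p q ^ 2 <= norm2 p * norm2 q.
Proof. rewrite lagrange. nra. Qed.

Lemma norm2_pos_of_cross p q : cross p q <> 0 -> 0 < norm2 p.
Proof.
  intros Hc. destruct (Rle_lt_or_eq_dec _ _ (norm2_nonneg p)) as [|E]; [assumption|].
  exfalso. pose proof (cross_sqr_le p q) as Hle. rewrite <- E, Rmult_0_l in Hle.
  apply Hc. nra.
Qed.

Lemma norm2_vsub_le x p y :
  norm2 (vsub x y) <= 2 * (norm2 (vsub x p) + norm2 (vsub p y)).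
Proof.
  unfold norm2, vsub; cbn.
  pose proof (pow2_ge_0 (fst x - 2 * fst p + fst y)).
  pose proof (pow2_ge_0 (snd x - 2 * snd p + snd y)). nra.
Qed.

Lemma norm2_vsub_mid p q : norm2 (vsub p (mid p q)) = norm2 (vsub p q) / 4.
Proof. unfold norm2, vsub, mid; cbn. field. Qed.

Lemma norm2_vsub_mid_r p q : norm2 (vsub q (mid p q)) = norm2 (vsub p q) / 4.
Proof. unfold norm2, vsub, mid; cbn. field. Qed.

Lemma norm2_vsub_sym p q : norm2 (vsub p q) = norm2 (vsub q p).
Proof. unfold norm2, vsub; cbn. ring. Qed.

Lemma edist_norm2 p q : edist p q = sqrt (norm2 (vsub p q)).
Proof. reflexivity. Qed.

Lemma edist_sqr p q : edist p q ^ 2 = norm2 (vsub p q).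
Proof. apply pow2_sqrt, norm2_nonneg. Qed.

Lemma edist_lt_iff r p q : 0 < r -> edist p q < r <-> norm2 (vsub p q) < r ^ 2.
Proof.
  intros Hr. rewrite <- edist_sqr. pose proof (sqrt_pos (norm2 (vsub p q))).
  rewrite <- edist_norm2 in *. split; intros; nra.
Qed.

Lemma sqr_le_norm2_of_le_edist r p q :
  0 <= r -> r <= edist p q -> r ^ 2 <= norm2 (vsub p q).
Proof. intros Hr H. rewrite <- edist_sqr. nra. Qed.

Lemma deck_norm2 N m n x y :
  norm2 (vsub (deck N m n x) (deck N m n y)) = norm2 (vsub x y).
Proof.
  destruct N; unfold norm2, vsub; cbn; [ring | destruct (Z.even m); ring].
Qed.

Lemma deck_inverse N m n : exists m' n', forall x,
  deck N m' n' (deck N m n x) = x /\ deck N m n (deck N m' n' x) = x.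
Proof.
  destruct N as [u1 u2 v1 v2 | a b].
  - exists (- m)%Z, (- n)%Z. intros [x y]. cbn. rewrite !opp_IZR.
    split; f_equal; ring.
  - exists (- m)%Z, (if Z.even m then (- n)%Z else n). intros [x y]. cbn.
    rewrite Z.even_opp. destruct (Z.even m); rewrite ?opp_IZR; split; f_equal; ring.
Qed.

Lemma disjoint_disks_iff N p1 p2 r : 0 < r ->
  disjoint_disks N p1 p2 r <-> forall m n, 4 * r ^ 2 <= norm2 (vsub p1 (deck N m n p2)).
Proof.
  intros Hr. split.
  - intros Hdisj m n. set (q := deck N m n p2).
    destruct (Rlt_or_le (norm2 (vsub p1 q)) (4 * r ^ 2)) as [Hlt|]; [exfalso|assumption].
    destruct (deck_inverse N m n) as (m' & n' & Hinv).
    set (M := mid p1 q). set (y := deck N m' n' M).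
    apply (Hdisj M y).
    + apply edist_lt_iff; [assumption|]. unfold M. rewrite norm2_vsub_mid. lra.
    + apply edist_lt_iff; [assumption|].
      rewrite <- (deck_norm2 N m n p2 y). unfold y. rewrite (proj2 (Hinv M)). fold q.
      unfold M. rewrite norm2_vsub_mid_r. lra.
    + exists m', n'. reflexivity.
  - intros Hfar x y Hx Hy [m [n Hxy]].
    destruct (deck_inverse N m n) as (m' & n' & Hinv).
    apply edist_lt_iff in Hx, Hy; try assumption.
    assert (Hx' : norm2 (vsub x (deck N m' n' p2)) < r ^ 2).
    { rewrite <- (proj1 (Hinv x)), Hxy, deck_norm2, norm2_vsub_sym. assumption. }
    pose proof (norm2_vsub_le p1 x (deck N m' n' p2)). specialize (Hfar m' n'). lra.
Qed.

Lemma embedded_disk_translation N p r m n t : 0 < r -> embedded_disk N p r ->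
  (forall x, deck N m n x = vadd x t) -> t <> (0, 0) -> 4 * r ^ 2 <= norm2 t.
Proof.
  intros Hr Hemb Hdeck Ht.
  destruct (Rlt_or_le (norm2 t) (4 * r ^ 2)) as [Hlt|]; [exfalso|assumption].
  destruct p as [px py], t as [t1 t2].
  assert (Hxy : (px - t1 / 2, py - t2 / 2) = (px + t1 / 2, py + t2 / 2)).
  { apply Hemb.
    - apply edist_lt_iff; [assumption|]. unfold norm2, vsub in *; cbn in *. nra.
    - apply edist_lt_iff; [assumption|]. unfold norm2, vsub in *; cbn in *. nra.
    - exists m, n. rewrite Hdeck. unfold vadd; cbn. f_equal; field. }
  injection Hxy as E1 E2. apply Ht. f_equal; lra.
Qed.

Lemma embedded_disk_of_translations N p r (t : Z -> Z -> pt) : 0 < r ->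
  (forall m n x, deck N m n x = vadd x (t m n)) ->
  (forall m n, t m n <> (0, 0) -> 4 * r ^ 2 <= norm2 (t m n)) ->
  embedded_disk N p r.
Proof.
  intros Hr Hdeck Hshort x y Hx Hy [m [n Hxy]].
  apply edist_lt_iff in Hx, Hy; try assumption.
  rewrite Hdeck in Hxy. subst y. specialize (Hshort m n).
  destruct (t m n) as [t1 t2].
  assert (Hsmall : norm2 (t1, t2) < 4 * r ^ 2).
  { pose proof (norm2_vsub_le (vadd x (t1, t2)) p x) as Htri.
    rewrite norm2_vsub_sym in Hy.
    replace (norm2 (vsub (vadd x (t1, t2)) x)) with (norm2 (t1, t2)) in Htri
      by (unfold norm2, vsub, vadd; cbn; ring).
    lra. }
  destruct (Rlt_or_le 0 (norm2 (t1, t2))) as [Hpos|Hzero].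
  - exfalso. enough (4 * r ^ 2 <= norm2 (t1, t2)) by lra.
    apply Hshort. intro E. injection E as -> ->. unfold norm2 in Hpos; cbn in Hpos. lra.
  - unfold norm2 in Hzero; cbn in Hzero.
    assert (t1 = 0) by nra. assert (t2 = 0) by nra. subst.
    destruct x. unfold vadd; cbn. f_equal; ring.
Qed.

Lemma embedded_disk_klein_glide a b p r n : 0 < a -> 0 < r ->
  embedded_disk (FlatKlein a b) p r -> 4 * r ^ 2 <= a ^ 2 + (2 * snd p - IZR n * b) ^ 2.
Proof.
  intros Ha Hr Hemb.
  destruct (Rlt_or_le (a ^ 2 + (2 * snd p - IZR n * b) ^ 2) (4 * r ^ 2)) as [Hlt|];
    [exfalso|assumption].
  destruct p as [px py]; cbn in Hlt.
  assert (Hxy : (px - a / 2, IZR n * b / 2) = (px + a / 2, IZR n * b / 2)).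
  { apply Hemb.
    - apply edist_lt_iff; [assumption|]. unfold norm2, vsub; cbn. nra.
    - apply edist_lt_iff; [assumption|]. unfold norm2, vsub; cbn. nra.
    - exists 1%Z, n. cbn. f_equal; field. }
  injection Hxy. lra.
Qed.

Lemma flat_dist_sqr_le N p1 p2 d m n : is_flat_dist N p1 p2 d ->
  d ^ 2 <= norm2 (vsub p1 (deck N m n p2)).
Proof.
  intros [[m0 [n0 Hd]] Hmin]. apply sqr_le_norm2_of_le_edist; [|apply Hmin].
  rewrite <- Hd. apply sqrt_pos.
Qed.

Lemma diam_le_flat_dist N h p1 p2 d : two_disk_config N h p1 p2 ->
  is_flat_dist N p1 p2 d -> h <= d.
Proof.
  intros (_ & Hh & _ & _ & Hdisj) [[m [n Hd]] _].
  assert (Hfar := proj1 (disjoint_disks_iff N p1 p2 (h / 2) ltac:(lra)) Hdisj m n).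
  rewrite <- edist_sqr, Hd in Hfar. assert (0 <= d) by (rewrite <- Hd; apply sqrt_pos).
  nra.
Qed.

Lemma exists_near_multiple x c : c <> 0 -> exists k : Z, (x - IZR k * c) ^ 2 <= c ^ 2 / 4.
Proof.
  intros Hc. destruct (archimed (x / c + 1 / 2)) as [H1 H2].
  exists (up (x / c + 1 / 2) - 1)%Z. rewrite minus_IZR.
  set (t := x / c - (IZR (up (x / c + 1 / 2)) - 1)).
  replace (x - _ * c) with (c * t) by (unfold t; field; assumption).
  assert (t ^ 2 <= 1 / 4) by (unfold t in *; nra). nra.
Qed.

Lemma exists_floor_multiple x c : 0 < c -> exists k : Z, 0 <= x - IZR k * c <= c.
Proof.
  intros Hc. destruct (archimed (x / c)) as [H1 H2].
  exists (up (x / c) - 1)%Z. rewrite minus_IZR.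
  replace (x - _ * c) with (c * (x / c - (IZR (up (x / c)) - 1))) by (field; lra).
  split; [apply Rmult_le_pos|]; nra.
Qed.

(** * Klein bottles *)

Lemma klein_wide_ineq a b h D : 0 < h -> h <= a -> h <= b -> h ^ 2 < D ->
  4 * D <= a ^ 2 + b ^ 2 -> 3 * h ^ 2 * (4 * h ^ 2 + D) < 5 * (a * b) ^ 2.
Proof.
  intros Hh Ha Hb HD Hcov.
  assert (0 <= (a ^ 2 - h ^ 2) * (b ^ 2 - h ^ 2)) by (apply Rmult_le_pos; nra).
  assert (0 < h ^ 2) by nra.
  nra.
Qed.

Lemma klein_narrow_core a h c e R S D : 0 < h -> h <= 2 * a -> a < h -> 0 <= c ->
  c ^ 2 = h ^ 2 - a ^ 2 -> 0 <= e <= a -> 0 <= R -> R + c <= S ->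
  D <= e ^ 2 + R ^ 2 -> D <= (a - e) ^ 2 + S ^ 2 -> h ^ 2 <= D ->
  h ^ 2 * (D + 2 * h ^ 2) <= 4 * a ^ 2 * S ^ 2.
Proof.
  intros Hh H2a Hah Hc Hc2 He HR HS HD1 HD2 HD.
  assert (Ha : 0 < a) by lra.
  destruct (Rle_or_lt (4 * a ^ 2 * D) (h ^ 2 * (D + 2 * h ^ 2))) as [Hsmall|Hlarge].
  - assert (Hac : 4 * a ^ 2 <= 3 * h ^ 2) by nra.
    assert (HSc : (S - c) ^ 2 >= D - a ^ 2) by nra.
    assert (HSc' : S - c >= c) by nra.
    assert (HS2 : S ^ 2 >= D + 3 * h ^ 2 - 4 * a ^ 2) by nra.
    assert (4 * a ^ 2 * S ^ 2 >= 4 * a ^ 2 * (D + 3 * h ^ 2 - 4 * a ^ 2)) by nra.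
    assert (0 <= (4 * a ^ 2 - h ^ 2) * (D - h ^ 2)) by (apply Rmult_le_pos; nra).
    assert (0 <= (4 * a ^ 2 - h ^ 2) * (3 * h ^ 2 - 4 * a ^ 2)) by (apply Rmult_le_pos; nra).
    nra.
  - (* g is the horizontal offset at which the image at (a - e, S) gives exactly the claim. *)
    set (g := sqrt ((4 * a ^ 2 * D - h ^ 2 * D - 2 * h ^ 4) / (4 * a ^ 2))).
    assert (Hg0 : 0 <= g) by apply sqrt_pos.
    assert (Hg2 : 4 * a ^ 2 * g ^ 2 = 4 * a ^ 2 * D - h ^ 2 * D - 2 * h ^ 4).
    { unfold g. rewrite pow2_sqrt; [field; lra|].
      apply Rmult_le_pos; [nra|]. left. apply Rinv_0_lt_compat. nra. }
    destruct (Rle_or_lt (a - e) g) as [Hnear|Hfar].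
    + assert (S ^ 2 >= D - g ^ 2) by nra. nra.
    + assert (He2 : e ^ 2 <= (a - g) ^ 2) by nra.
      assert (HSc : (S - c) ^ 2 >= D - (a - g) ^ 2) by nra.
      assert ((a - g) ^ 2 <= a ^ 2) by nra.
      assert (HSc' : S - c >= c) by nra.
      assert (HS2 : S ^ 2 >= D - (a - g) ^ 2 + 3 * c ^ 2) by nra.
      assert (Hag : 2 * a * g >= 4 * a ^ 2 - 3 * h ^ 2).
      { destruct (Rle_or_lt (4 * a ^ 2) (3 * h ^ 2)); [nra|].
        assert (4 * a ^ 2 * g ^ 2 >= (4 * a ^ 2 - 3 * h ^ 2) ^ 2) by nra. nra. }
      assert (4 * a ^ 2 * S ^ 2 >= 4 * a ^ 2 * (D - (a - g) ^ 2 + 3 * c ^ 2)) by nra.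
      nra.
Qed.

Lemma klein_narrow_ineq a b h D e w0 w1 : 0 < h -> h <= 2 * a -> a < h -> 0 <= e <= a ->
  w0 ^ 2 <= b ^ 2 / 4 -> w1 ^ 2 <= b ^ 2 / 4 ->
  D <= e ^ 2 + w0 ^ 2 -> D <= (a - e) ^ 2 + w1 ^ 2 ->
  h ^ 2 <= a ^ 2 + (w0 + w1) ^ 2 -> h ^ 2 <= a ^ 2 + (w0 - w1) ^ 2 -> h ^ 2 <= D ->
  h ^ 2 * (D + 2 * h ^ 2) <= (a * b) ^ 2.
Proof.
  intros Hh H2a Hah He Hw0 Hw1 HD0 HD1 Hplus Hminus HD.
  set (c := sqrt (h ^ 2 - a ^ 2)).
  assert (Hc0 : 0 <= c) by apply sqrt_pos.
  assert (Hc2 : c ^ 2 = h ^ 2 - a ^ 2) by (apply pow2_sqrt; nra).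
  pose proof (pow2_abs w0) as HR2. pose proof (pow2_abs w1) as HS2.
  pose proof (Rabs_pos w0). pose proof (Rabs_pos w1).
  assert (Hgap : c ^ 2 <= (Rabs w0 - Rabs w1) ^ 2).
  { destruct (Rcase_abs w0), (Rcase_abs w1);
      rewrite ?(Rabs_left w0), ?(Rabs_right w0), ?(Rabs_left w1), ?(Rabs_right w1)
        by assumption; nra. }
  destruct (Rle_or_lt (Rabs w0) (Rabs w1)).
  - assert (Hcore : h ^ 2 * (D + 2 * h ^ 2) <= 4 * a ^ 2 * Rabs w1 ^ 2)
      by (apply (klein_narrow_core a h c e (Rabs w0)); nra).
    nra.
  - assert (Hcore : h ^ 2 * (D + 2 * h ^ 2) <= 4 * a ^ 2 * Rabs w0 ^ 2)
      by (apply (klein_narrow_core a h c (a - e) (Rabs w1)); nra).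
    nra.
Qed.

Lemma klein_covering a b p1 p2 d : 0 < a -> 0 < b ->
  is_flat_dist (FlatKlein a b) p1 p2 d -> 4 * d ^ 2 <= a ^ 2 + b ^ 2.
Proof.
  intros Ha Hb Hdist. pose proof (fun m n => flat_dist_sqr_le _ _ _ _ m n Hdist) as Hcov.
  destruct p1 as [x1 y1], p2 as [x2 y2].
  destruct (exists_near_multiple (x1 - x2) a) as [m Hm]; [lra|].
  set (Y := if Z.even m then y2 else - y2).
  destruct (exists_near_multiple (y1 - Y) b) as [n Hn]; [lra|].
  specialize (Hcov m n). unfold norm2, vsub in Hcov; cbn in Hcov. fold Y in Hcov.
  replace (x1 - (x2 + IZR m * a)) with (x1 - x2 - IZR m * a) in Hcov by ring.
  replace (y1 - (Y + IZR n * b)) with (y1 - Y - IZR n * b) in Hcov by ring.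
  lra.
Qed.

Lemma klein_narrow_data a b h d p1 p2 : 0 < a -> 0 < b -> 0 < h ->
  embedded_disk (FlatKlein a b) p1 (h / 2) -> embedded_disk (FlatKlein a b) p2 (h / 2) ->
  is_flat_dist (FlatKlein a b) p1 p2 d ->
  exists e w0 w1, 0 <= e <= a /\ w0 ^ 2 <= b ^ 2 / 4 /\ w1 ^ 2 <= b ^ 2 / 4 /\
    d ^ 2 <= e ^ 2 + w0 ^ 2 /\ d ^ 2 <= (a - e) ^ 2 + w1 ^ 2 /\
    h ^ 2 <= a ^ 2 + (w0 + w1) ^ 2 /\ h ^ 2 <= a ^ 2 + (w0 - w1) ^ 2.
Proof.
  intros Ha Hb Hh Hemb1 Hemb2 Hdist.
  (* The images of p2 in columns m and m + 1 lie at horizontal offsets e and a - e from p1 and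
     vertical offsets w0 and w1; the glides through p1 and through p2 give the last two bounds. *)
  pose proof (fun m n => flat_dist_sqr_le _ _ _ _ m n Hdist) as Hcov.
  assert (Hr : 0 < h / 2) by lra.
  replace (h ^ 2) with (4 * (h / 2) ^ 2) by field.
  destruct p1 as [x1 y1], p2 as [x2 y2].
  destruct (exists_floor_multiple (x1 - x2) a Ha) as [m He].
  set (Y := if Z.even m then y2 else - y2).
  assert (HY : (if Z.even (m + 1) then y2 else - y2) = - Y).
  { unfold Y. rewrite Z.even_add. destruct (Z.even m); cbn; ring. }
  destruct (exists_near_multiple (y1 - Y) b) as [n0 Hw0]; [lra|].
  destruct (exists_near_multiple (y1 + Y) b) as [n1 Hw1]; [lra|].
  exists (x1 - x2 - IZR m * a), (y1 - Y - IZR n0 * b), (y1 + Y - IZR n1 * b).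
  repeat split; try lra.
  - specialize (Hcov m n0). unfold norm2, vsub in Hcov; cbn in Hcov. fold Y in Hcov.
    replace (x1 - x2 - IZR m * a) with (x1 - (x2 + IZR m * a)) by ring.
    replace (y1 - Y - IZR n0 * b) with (y1 - (Y + IZR n0 * b)) by ring. exact Hcov.
  - specialize (Hcov (m + 1)%Z n1). unfold norm2, vsub in Hcov; cbn in Hcov.
    rewrite HY, plus_IZR in Hcov.
    replace (a - (x1 - x2 - IZR m * a)) with (- (x1 - (x2 + (IZR m + 1) * a))) by ring.
    replace (y1 + Y - IZR n1 * b) with (y1 - (- Y + IZR n1 * b)) by ring. nra.
  - pose proof (embedded_disk_klein_glide a b (x1, y1) (h / 2) (n0 + n1) Ha Hr Hemb1) as Hg.
    cbn in Hg. rewrite plus_IZR in Hg.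
    replace (y1 - Y - IZR n0 * b + (y1 + Y - IZR n1 * b))
      with (2 * y1 - (IZR n0 + IZR n1) * b) by ring. exact Hg.
  - unfold Y in *. destruct (Z.even m).
    + pose proof (embedded_disk_klein_glide a b (x2, y2) (h / 2) (n1 - n0) Ha Hr Hemb2) as Hg.
      cbn in Hg. rewrite minus_IZR in Hg.
      replace ((y1 - y2 - IZR n0 * b - (y1 + y2 - IZR n1 * b)) ^ 2)
        with ((2 * y2 - (IZR n1 - IZR n0) * b) ^ 2) by ring. exact Hg.
    + pose proof (embedded_disk_klein_glide a b (x2, y2) (h / 2) (n0 - n1) Ha Hr Hemb2) as Hg.
      cbn in Hg. rewrite minus_IZR in Hg.
      replace (y1 - - y2 - IZR n0 * b - (y1 + - y2 - IZR n1 * b))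
        with (2 * y2 - (IZR n0 - IZR n1) * b) by ring. exact Hg.
Qed.

Lemma klein_bound a b h d p1 p2 : two_disk_config (FlatKlein a b) h p1 p2 ->
  is_flat_dist (FlatKlein a b) p1 p2 d -> h < d ->
  3 * h ^ 2 * (4 * h ^ 2 + d ^ 2) < 5 * (a * b) ^ 2.
Proof.
  intros Hconf Hdist Hhd. destruct Hconf as ([Ha Hb] & Hh & Hemb1 & Hemb2 & _).
  assert (Hr : 0 < h / 2) by lra.
  assert (H2a : h ^ 2 <= norm2 (2 * a, 0)).
  { replace (h ^ 2) with (4 * (h / 2) ^ 2) by field.
    apply (embedded_disk_translation _ p1 _ 2 0 _ Hr Hemb1).
    - intros [x y]. cbn. unfold vadd; cbn. f_equal; ring.
    - intro E. injection E. lra. }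
  assert (Hbh : h ^ 2 <= norm2 (0, b)).
  { replace (h ^ 2) with (4 * (h / 2) ^ 2) by field.
    apply (embedded_disk_translation _ p1 _ 0 1 _ Hr Hemb1).
    - intros [x y]. cbn. unfold vadd; cbn. f_equal; ring.
    - intro E. injection E. lra. }
  unfold norm2 in H2a, Hbh; cbn in H2a, Hbh.
  assert (HD : h ^ 2 < d ^ 2) by nra.
  destruct (Rle_or_lt h a) as [Hwide|Hnarrow].
  - apply klein_wide_ineq; try nra. apply (klein_covering a b p1 p2); assumption.
  - destruct (klein_narrow_data a b h d p1 p2)
      as (e & w0 & w1 & He & Hw0 & Hw1 & HD0 & HD1 & Hp & Hm); try assumption.
    assert (h ^ 2 * (d ^ 2 + 2 * h ^ 2) <= (a * b) ^ 2)
      by (apply (klein_narrow_ineq a b h _ e w0 w1); nra).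
    assert (0 < h ^ 2 * (d ^ 2 - h ^ 2)) by (apply Rmult_lt_0_compat; nra).
    nra.
Qed.

(** * Tori *)

Lemma list_argmin {T} (f : T -> R) (l : list T) : l <> nil ->
  exists x, In x l /\ forall y, In y l -> f x <= f y.
Proof.
  induction l as [|a l IH]; [congruence|]. intros _.
  destruct l as [|b l'].
  - exists a. split; [now left|]. intros y [<-|[]]. lra.
  - destruct IH as [x [Hx Hmin]]; [discriminate|].
    destruct (Rle_or_lt (f a) (f x)).
    + exists a. split; [now left|]. intros y [<-|Hy]; [lra|]. specialize (Hmin y Hy). lra.
    + exists x. split; [now right|]. intros y [<-|Hy]; [lra|]. auto.
Qed.

Definition zrange (B : Z) : list Z :=
  map (fun i => (Z.of_nat i - B)%Z) (seq 0 (Z.to_nat (2 * B + 1))).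

Lemma in_zrange B m : (Z.abs m <= B)%Z -> In m (zrange B).
Proof.
  intros H. apply in_map_iff. exists (Z.to_nat (m + B)). split.
  - rewrite Z2Nat.id by lia. lia.
  - apply in_seq. lia.
Qed.

Lemma exists_min_nonzero_Z2 (f : Z -> Z -> R) (m1 n1 B : Z) : (m1, n1) <> (0, 0)%Z ->
  (forall m n, (m, n) <> (0, 0)%Z -> f m n <= f m1 n1 -> (Z.abs m <= B /\ Z.abs n <= B)%Z) ->
  exists m0 n0, (m0, n0) <> (0, 0)%Z /\
    forall m n, (m, n) <> (0, 0)%Z -> f m0 n0 <= f m n.
Proof.
  intros Hnz1 Hbox.
  set (nonzero := fun w : Z * Z => negb (Z.eqb (fst w) 0 && Z.eqb (snd w) 0)).
  assert (Hnonzero : forall w, nonzero w = true <-> w <> (0, 0)%Z).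
  { intros [m n]. unfold nonzero; cbn.
    destruct (Z.eqb_spec m 0), (Z.eqb_spec n 0); subst; cbn; split; congruence. }
  set (l := filter nonzero (list_prod (zrange B) (zrange B))).
  assert (Hin : forall m n, (m, n) <> (0, 0)%Z -> f m n <= f m1 n1 -> In (m, n) l).
  { intros m n Hnz Hle. destruct (Hbox m n Hnz Hle).
    apply filter_In. split; [apply in_prod; apply in_zrange; assumption|].
    apply Hnonzero. assumption. }
  destruct (list_argmin (fun w => f (fst w) (snd w)) l) as [[m0 n0] [Hw0 Hmin]].
  { intro E. pose proof (Hin m1 n1 Hnz1 (Rle_refl _)) as H. rewrite E in H. contradiction. }
  apply filter_In in Hw0. exists m0, n0. split; [apply Hnonzero, Hw0|].
  assert (Hle1 : f m0 n0 <= f m1 n1) by exact (Hmin (m1, n1) (Hin m1 n1 Hnz1 (Rle_refl _))).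
  intros m n Hnz. destruct (Rle_or_lt (f m n) (f m1 n1)) as [Hle|].
  - exact (Hmin (m, n) (Hin m n Hnz Hle)).
  - lra.
Qed.

Lemma torus_ineq s A2 h d : 0 < h -> h < d -> h ^ 2 <= s ->
  4 * s * d ^ 2 <= s ^ 2 + A2 -> 3 * s ^ 2 <= 4 * A2 ->
  3 * h ^ 2 * (4 * h ^ 2 + d ^ 2) < 5 * A2.
Proof.
  intros Hh Hd Hs Hcov Hpack.
  assert (Hd2 : h ^ 2 < d ^ 2) by nra.
  destruct (Rle_or_lt s (4 * d ^ 2 - h ^ 2)) as [Hle|Hgt].
  - assert (0 <= (s - h ^ 2) * (4 * d ^ 2 - s - h ^ 2)) by (apply Rmult_le_pos; nra).
    assert (0 < h ^ 2) by nra. nra.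
  - assert (A2 >= 3 / 4 * (3 * d ^ 2) ^ 2) by nra.
    assert (0 < d ^ 2 * d ^ 2) by (assert (0 < d ^ 2) by nra; nra).
    nra.
Qed.

Section Torus.

Variables u1 u2 v1 v2 : R.

Local Notation det := (u1 * v2 - u2 * v1).

Definition lat (m n : Z) : pt := (IZR m * u1 + IZR n * v1, IZR m * u2 + IZR n * v2).

Lemma deck_torus m n x : deck (FlatTorus u1 u2 v1 v2) m n x = vadd x (lat m n).
Proof. unfold lat, vadd; cbn. f_equal; ring. Qed.

Lemma cross_lat m n m' n' :
  cross (lat m n) (lat m' n') = (IZR m * IZR n' - IZR n * IZR m') * det.
Proof. unfold cross, lat; cbn. ring. Qed.

Hypothesis det_nz : det <> 0.

Lemma norm2_lat_pos m n : (m, n) <> (0, 0)%Z -> 0 < norm2 (lat m n).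
Proof.
  intros Hnz. destruct (Z.eq_dec m 0) as [->|Hm].
  - apply (norm2_pos_of_cross _ (lat 1 0)). rewrite cross_lat.
    assert (IZR n <> 0) by (apply not_0_IZR; congruence). cbn.
    intro E. apply Rmult_integral in E. destruct E; [nra|contradiction].
  - apply (norm2_pos_of_cross _ (lat 0 1)). rewrite cross_lat.
    assert (IZR m <> 0) by (apply not_0_IZR; assumption). cbn.
    intro E. apply Rmult_integral in E. destruct E; [nra|contradiction].
Qed.

Lemma lat_coeff_bound m n : (IZR m ^ 2 + IZR n ^ 2) * det ^ 2 <=
  norm2 (lat m n) * (norm2 (lat 1 0) + norm2 (lat 0 1)).
Proof.
  pose proof (cross_sqr_le (lat m n) (lat 0 1)) as Hm.
  pose proof (cross_sqr_le (lat m n) (lat 1 0)) as Hn.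
  rewrite cross_lat in Hm, Hn. cbn [IZR IPR] in Hm, Hn. nra.
Qed.

Lemma exists_shortest_lat : exists m0 n0, (m0, n0) <> (0, 0)%Z /\
  forall m n, (m, n) <> (0, 0)%Z -> norm2 (lat m0 n0) <= norm2 (lat m n).
Proof.
  set (S := norm2 (lat 1 0) + norm2 (lat 0 1)).
  set (X := norm2 (lat 1 0) * S / det ^ 2).
  assert (Hdet2 : 0 < det ^ 2) by (rewrite <- Rsqr_pow2; apply Rsqr_pos_lt; assumption).
  destruct (archimed X) as [HB _].
  apply (exists_min_nonzero_Z2 (fun m n => norm2 (lat m n)) 1 0 (up X)); [congruence|].
  intros m n _ Hle.
  assert (HS : 0 <= S) by (unfold S; pose proof (norm2_nonneg (lat 1 0));
                              pose proof (norm2_nonneg (lat 0 1)); lra).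
  assert (Hmn : IZR m ^ 2 + IZR n ^ 2 <= X).
  { unfold X. apply (Rmult_le_reg_r (det ^ 2)); [assumption|].
    unfold Rdiv. rewrite Rmult_assoc, Rinv_l by lra.
    pose proof (lat_coeff_bound m n) as Hb. fold S in Hb. nra. }
  assert (Hm : (m * m < up X)%Z) by (apply lt_IZR; rewrite mult_IZR; nra).
  assert (Hn : (n * n < up X)%Z) by (apply lt_IZR; rewrite mult_IZR; nra).
  split; nia.
Qed.

Section Shortest.

Variables m0 n0 : Z.
Hypothesis shortest_nz : (m0, n0) <> (0, 0)%Z.
Hypothesis shortest_min :
  forall m n, (m, n) <> (0, 0)%Z -> norm2 (lat m0 n0) <= norm2 (lat m n).

Lemma shortest_lat_coprime : Z.gcd m0 n0 = 1%Z.
Proof.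
  set (g := Z.gcd m0 n0).
  assert (Hg0 : (0 <= g)%Z) by apply Z.gcd_nonneg.
  assert (Hgnz : g <> 0%Z) by (intro E; apply shortest_nz; apply Z.gcd_eq_0 in E;
                                  destruct E as [-> ->]; reflexivity).
  destruct (Z.eq_dec g 1) as [|Hne]; [assumption|exfalso].
  destruct (Z.gcd_divide_l m0 n0) as [k Hk], (Z.gcd_divide_r m0 n0) as [k' Hk'].
  fold g in Hk, Hk'.
  assert (Hkk : (k, k') <> (0, 0)%Z)
    by (intro E; injection E as -> ->; apply shortest_nz; f_equal; lia).
  assert (Hscale : norm2 (lat m0 n0) = IZR g ^ 2 * norm2 (lat k k')).
  { unfold norm2, lat; cbn. rewrite Hk, Hk', !mult_IZR. ring. }
  assert (Hg2 : 4 <= IZR g ^ 2) by (assert (2 <= IZR g) by (apply IZR_le; lia); nra).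
  pose proof (norm2_lat_pos k k' Hkk). pose proof (shortest_min k k' Hkk). nra.
Qed.

Lemma exists_lat_complement : exists m2 n2, cross (lat m0 n0) (lat m2 n2) = det.
Proof.
  destruct (Z.gcd_bezout m0 n0 1 shortest_lat_coprime) as [p [q Hpq]].
  exists (- q)%Z, p. rewrite cross_lat, <- !mult_IZR, <- minus_IZR.
  replace (m0 * p - n0 * - q)%Z with (p * m0 + q * n0)%Z by ring.
  rewrite Hpq. ring.
Qed.

Lemma lat_packing m2 n2 : cross (lat m0 n0) (lat m2 n2) = det ->
  3 * norm2 (lat m0 n0) ^ 2 <= 4 * det ^ 2.
Proof.
  intros Hcross. set (l := lat m0 n0). set (k := lat m2 n2).
  assert (Hl : 0 < norm2 l) by (apply norm2_lat_pos; assumption).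
  destruct (exists_near_multiple (dot k l) (norm2 l)) as [j Hj]; [lra|].
  set (mm := (m2 - j * m0)%Z). set (nn := (n2 - j * n0)%Z).
  assert (Hw : lat mm nn = (fst k - IZR j * fst l, snd k - IZR j * snd l)).
  { unfold mm, nn, k, l, lat; cbn. rewrite !minus_IZR, !mult_IZR. f_equal; ring. }
  assert (Hdot : dot (lat mm nn) l = dot k l - IZR j * norm2 l)
    by (rewrite Hw; unfold dot, norm2; cbn; ring).
  assert (Hcr : cross (lat mm nn) l = - det)
    by (rewrite Hw, <- Hcross; unfold cross; cbn; ring).
  assert (Hnz : (mm, nn) <> (0, 0)%Z).
  { intro E. injection E as Em En. unfold l in Hcr.
    rewrite Em, En, cross_lat in Hcr. cbn in Hcr. lra. }
  pose proof (shortest_min mm nn Hnz) as Hmin. fold l in Hmin.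
  pose proof (lagrange (lat mm nn) l) as Hlag. rewrite Hdot, Hcr in Hlag.
  nra.
Qed.

End Shortest.

Lemma lat_covering m0 n0 m2 n2 z : cross (lat m0 n0) (lat m2 n2) = det ->
  exists m n, 4 * norm2 (lat m0 n0) * norm2 (vsub z (lat m n)) <= norm2 (lat m0 n0) ^ 2 + det ^ 2.
Proof.
  intros Hcross. set (l := lat m0 n0). set (k := lat m2 n2).
  assert (Hl : 0 < norm2 l) by (apply (norm2_pos_of_cross _ k); fold l k in Hcross; lra).
  destruct (exists_near_multiple (cross l z) det det_nz) as [i Hi].
  set (y := (fst z - IZR i * fst k, snd z - IZR i * snd k)).
  destruct (exists_near_multiple (dot y l) (norm2 l)) as [j Hj]; [lra|].
  exists (i * m2 + j * m0)%Z, (i * n2 + j * n0)%Z.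
  set (w := vsub z (lat (i * m2 + j * m0) (i * n2 + j * n0))).
  assert (Hw : w = (fst y - IZR j * fst l, snd y - IZR j * snd l)).
  { unfold w, y, k, l, vsub, lat; cbn. rewrite !plus_IZR, !mult_IZR. f_equal; ring. }
  assert (Hdot : dot w l = dot y l - IZR j * norm2 l)
    by (rewrite Hw; unfold dot, norm2; cbn; ring).
  assert (Hcr : cross w l = - (cross l z - IZR i * det))
    by (rewrite Hw, <- Hcross; unfold y, cross; cbn; ring).
  pose proof (lagrange w l) as Hlag. rewrite Hdot, Hcr in Hlag.
  nra.
Qed.

Lemma torus_bound h d p1 p2 : two_disk_config (FlatTorus u1 u2 v1 v2) h p1 p2 ->
  is_flat_dist (FlatTorus u1 u2 v1 v2) p1 p2 d -> h < d ->
  3 * h ^ 2 * (4 * h ^ 2 + d ^ 2) < 5 * det ^ 2.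
Proof.
  intros (_ & Hh & Hemb & _) Hdist Hhd.
  destruct exists_shortest_lat as (m0 & n0 & Hnz & Hmin).
  destruct (exists_lat_complement m0 n0 Hnz Hmin) as (m2 & n2 & Hcross).
  assert (Hsys : h ^ 2 <= norm2 (lat m0 n0)).
  { replace (h ^ 2) with (4 * (h / 2) ^ 2) by field.
    apply (embedded_disk_translation _ p1 (h / 2) m0 n0 _ ltac:(lra) Hemb (deck_torus m0 n0)).
    intro E. pose proof (norm2_lat_pos m0 n0 Hnz) as Hpos. rewrite E in Hpos.
    unfold norm2 in Hpos; cbn in Hpos. lra. }
  destruct (lat_covering m0 n0 m2 n2 (vsub p1 p2) Hcross) as (m & n & Hclose).
  assert (Hd : d ^ 2 <= norm2 (vsub (vsub p1 p2) (lat m n))).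
  { replace (vsub (vsub p1 p2) (lat m n)) with (vsub p1 (deck (FlatTorus u1 u2 v1 v2) m n p2)).
    - exact (flat_dist_sqr_le _ _ _ _ m n Hdist).
    - rewrite deck_torus. unfold vsub, vadd; cbn. f_equal; ring. }
  apply (torus_ineq (norm2 (lat m0 n0))); try lra.
  - pose proof (norm2_nonneg (lat m0 n0)). nra.
  - exact (lat_packing m0 n0 Hnz Hmin m2 n2 Hcross).
Qed.

End Torus.

Lemma flat_surface_bound N h d p1 p2 : two_disk_config N h p1 p2 ->
  is_flat_dist N p1 p2 d -> h < d -> 3 * h ^ 2 * (4 * h ^ 2 + d ^ 2) < 5 * area N ^ 2.
Proof.
  destruct N as [u1 u2 v1 v2 | a b]; intros Hconf Hdist Hhd; cbn [area].
  - rewrite pow2_abs. apply (torus_bound u1 u2 v1 v2 (proj1 Hconf) h d p1 p2); assumption.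
  - apply (klein_bound a b h d p1 p2); assumption.
Qed.

Lemma area_pos N : valid_surface N -> 0 < area N.
Proof.
  destruct N; cbn; [apply Rabs_pos_lt | intros [Ha Hb]; apply Rmult_lt_0_compat]; assumption.
Qed.

Lemma objective_nonneg N h d : valid_surface N -> 0 <= h -> 0 <= objective N h d.
Proof.
  intros HN Hh. pose proof (area_pos N HN). unfold objective.
  apply Rmult_le_pos; [apply Rmult_le_pos; [assumption | apply sqrt_pos]|].
  left. apply Rinv_0_lt_compat. assumption.
Qed.

Lemma objective_sqr N h d : valid_surface N ->
  objective N h d ^ 2 = h ^ 2 * (4 * h ^ 2 + d ^ 2) / area N ^ 2.
Proof.
  intros HN. pose proof (area_pos N HN). unfold objective.
  rewrite <- (pow2_sqrt (4 * h ^ 2 + d ^ 2)) at 2 by nra. field. lra.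
Qed.

Lemma objective_sqr_lt N h d p1 p2 : two_disk_config N h p1 p2 ->
  is_flat_dist N p1 p2 d -> h < d -> objective N h d ^ 2 < 5 / 3.
Proof.
  intros Hconf Hdist Hhd. pose proof (area_pos N (proj1 Hconf)).
  rewrite objective_sqr by exact (proj1 Hconf).
  pose proof (flat_surface_bound N h d p1 p2 Hconf Hdist Hhd).
  apply (Rmult_lt_reg_r (3 * area N ^ 2)); [nra|].
  replace (5 / 3 * (3 * area N ^ 2)) with (5 * area N ^ 2) by field.
  replace (h ^ 2 * _ / _ * _) with (3 * h ^ 2 * (4 * h ^ 2 + d ^ 2)) by (field; lra).
  assumption.
Qed.

(** * The hexagonal torus *)

(* A rectangular lattice with the second disk in the cell centre: the hexagonal packing. *)
Definition hex_torus : flat_surface := FlatTorus 1 0 0 (sqrt 3).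
Definition hex_center : pt := (1 / 2, sqrt 3 / 2).

Lemma sqrt3_sqr : sqrt 3 ^ 2 = 3.
Proof. apply pow2_sqrt. lra. Qed.

Lemma hex_valid : valid_surface hex_torus.
Proof. cbn. pose proof sqrt3_sqr. nra. Qed.

Lemma hex_lat m n : norm2 (lat 1 0 0 (sqrt 3) m n) = IZR m ^ 2 + 3 * IZR n ^ 2.
Proof.
  rewrite <- sqrt3_sqr at 2. unfold norm2, lat; cbn [fst snd]. ring.
Qed.

Lemma hex_center_dist m n : norm2 (vsub (0, 0) (deck hex_torus m n hex_center)) =
  (1 / 2 + IZR m) ^ 2 + 3 * (1 / 2 + IZR n) ^ 2.
Proof.
  rewrite <- sqrt3_sqr at 1. unfold norm2, vsub, hex_center; cbn [fst snd deck hex_torus]. field.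
Qed.

Lemma sqr_half_plus_int m : 1 / 4 <= (1 / 2 + IZR m) ^ 2.
Proof.
  destruct (Z_lt_le_dec m 0) as [Hm|Hm].
  - assert (IZR m <= -1) by (apply IZR_le; lia). nra.
  - assert (0 <= IZR m) by (apply IZR_le; lia). nra.
Qed.

Lemma sqr_int_ge1 m : m <> 0%Z -> 1 <= IZR m ^ 2.
Proof.
  intros Hm. destruct (Z_lt_le_dec m 0).
  - assert (IZR m <= -1) by (apply IZR_le; lia). nra.
  - assert (1 <= IZR m) by (apply IZR_le; lia). nra.
Qed.

Lemma hex_embedded p : embedded_disk hex_torus p (1 / 2).
Proof.
  apply (embedded_disk_of_translations _ _ _ (lat 1 0 0 (sqrt 3))); [lra | apply deck_torus|].
  intros m n Hnz. rewrite hex_lat.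
  destruct (Z.eq_dec m 0) as [->|Hm].
  - assert (Hn : n <> 0%Z) by (intros ->; apply Hnz; unfold lat; cbn; f_equal; ring).
    pose proof (sqr_int_ge1 n Hn). nra.
  - pose proof (sqr_int_ge1 m Hm). nra.
Qed.

Lemma hex_config : two_disk_config hex_torus 1 (0, 0) hex_center.
Proof.
  split; [exact hex_valid|]. split; [lra|].
  split; [apply hex_embedded|]. split; [apply hex_embedded|].
  apply disjoint_disks_iff; [lra|]. intros m n. rewrite hex_center_dist.
  pose proof (sqr_half_plus_int m). pose proof (sqr_half_plus_int n). lra.
Qed.

Lemma hex_flat_dist : is_flat_dist hex_torus (0, 0) hex_center 1.
Proof.
  split.
  - exists 0%Z, 0%Z. rewrite edist_norm2, hex_center_dist.
    transitivity (sqrt 1); [f_equal; field | apply sqrt_1].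
  - intros m n. rewrite edist_norm2, hex_center_dist, <- sqrt_1 at 1. apply sqrt_le_1_alt.
    pose proof (sqr_half_plus_int m). pose proof (sqr_half_plus_int n). lra.
Qed.

Lemma hex_objective_sqr : objective hex_torus 1 1 ^ 2 = 5 / 3.
Proof.
  rewrite objective_sqr by exact hex_valid. cbn [area hex_torus].
  rewrite pow2_abs. replace ((1 * sqrt 3 - 0 * 0) ^ 2) with (sqrt 3 ^ 2) by ring.
  rewrite sqrt3_sqr. field.
Qed.

Theorem lemma7 (N : flat_surface) (h d : R) (p1 p2 : pt) :
  two_disk_config N h p1 p2 ->
  is_flat_dist N p1 p2 d ->
  (forall (N' : flat_surface) (h' d' : R) (q1 q2 : pt),
      two_disk_config N' h' q1 q2 ->
      is_flat_dist N' q1 q2 d' ->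
      objective N' h' d' <= objective N h d) ->
  d = h.
Proof.
  intros Hconf Hdist Hmax.
  destruct (diam_le_flat_dist N h p1 p2 d Hconf Hdist) as [Hlt|Heq]; [exfalso|auto].
  pose proof (Hmax _ _ _ _ _ hex_config hex_flat_dist) as Hle.
  pose proof (objective_nonneg hex_torus 1 1 hex_valid ltac:(lra)) as Hhex.
  pose proof (pow_incr _ _ 2 (conj Hhex Hle)) as Hsqr.
  rewrite hex_objective_sqr in Hsqr.
  pose proof (objective_sqr_lt N h d p1 p2 Hconf Hdist Hlt). lra.
Qed.
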